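(* Assume $V=L$. If $\zeta\in\Xi$ and $X\in\mathrm{IPS}_\zeta$, then there is a uniform set $Y\in\mathrm{IPS}_\zeta$ with $Y\subseteq X$.
   Context: $T$ is the set of all nonempty finite sequences of countable ordinals, ordered by strict extension $\subset$. $\Xi$ is the set of all at most countable $\xi\subseteq T$ closed downward under $\subset$. $D=2^\omega$; $D^\xi$ is the product of $\xi$ copies of $D$ with the product topology; for $\eta\subseteq\xi$ and $x\in D^\xi$, $x\restriction\eta$ is the restriction. For $\zeta\in\Xi$, $\mathrm{IPS}_\zeta$ is the set of all $X\subseteq D^\zeta$ for which there is a homeomorphism $H$ of $D^\zeta$ onto $X$ such that for all $x_0,x_1\in D^\zeta$ and all $\xi\in\Xi$, $\xi\subseteq\zeta$: $x_0\restriction\xi=x_1\restriction\xi\iff H(x_0)\restriction\xi=H(x_1)\restriction\xi$. A set $Y\in\mathrm{IPS}_\zeta$ is uniform if for all $i\subset j$ in $\zeta$ and all $x,y\in Y$: $x(j)=y(j)$ implies $x(i)=y(i)$. *)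

From HB Require Import structures.
From mathcomp Require Import all_boot all_algebra.
From mathcomp Require Import all_classical all_reals all_analysis.
Set Implicit Arguments. Unset Strict Implicit. Unset Printing Implicit Defensive.
Import numFieldTopology.Exports.
Local Open Scope classical_set_scope.

(* Labels: the paper uses countable ordinals; we work with an arbitrary
   label type Lab. *)

Definition sext {Lab : Type} (s t : seq Lab) : Prop :=
  exists u : seq Lab, u <> [::] /\ t = s ++ u.

Definition Tset (Lab : Type) : set (seq Lab) := [set t : seq Lab | t <> [::]].

Definition inXi {Lab : Type} (xi : set (seq Lab)) : Prop :=
  [/\ xi `<=` @Tset Lab, countable xi &
      forall s t, xi t -> s <> [::] -> sext s t -> xi s].

Definition D := cantor_space.

Definition Dpow {Lab : Type} (zeta : set (seq Lab)) : Type :=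
  prod_topology (fun _ : {t : seq Lab | zeta t} => D).

Definition restr_eq {Lab : Type} (zeta xi : set (seq Lab)) (x y : Dpow zeta) : Prop :=
  forall t : {t : seq Lab | zeta t}, xi (proj1_sig t) -> x t = y t.

Definition homeo_onto {Lab : Type} (zeta : set (seq Lab))
    (H : Dpow zeta -> Dpow zeta) (X : set (Dpow zeta)) : Prop :=
  [/\ continuous H, injective H, range H = X &
      exists G : Dpow zeta -> Dpow zeta,
        {within X, continuous G} /\ (forall x, G (H x) = x)].

Definition IPS {Lab : Type} (zeta : set (seq Lab)) (X : set (Dpow zeta)) : Prop :=
  exists H : Dpow zeta -> Dpow zeta,
    homeo_onto H X /\
    forall (x0 x1 : Dpow zeta) (xi : set (seq Lab)),
      inXi xi -> xi `<=` zeta ->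
      (restr_eq xi x0 x1 <-> restr_eq xi (H x0) (H x1)).

Definition uniform {Lab : Type} (zeta : set (seq Lab)) (Y : set (Dpow zeta)) : Prop :=
  forall (i j : {t : seq Lab | zeta t}), sext (proj1_sig i) (proj1_sig j) ->
    forall x y, Y x -> Y y -> x j = y j -> x i = y i.

From HB Require Import structures.
From mathcomp Require Import all_boot all_algebra.
From mathcomp Require Import all_classical all_reals all_analysis.
Local Open Scope classical_set_scope.

(* Let H witness X ∈ IPS_ζ. It suffices to find a continuous K : D^ζ -> D^ζ
   such that K x j depends only on x on the prefixes of j while H (K x) j
   determines x on the prefixes of j: then Y = range (H ∘ K) is uniform, since
   H (K x) j determines x below j, hence K x below j, hence H (K x) i for all
   i ⊂ j; and compactness of D^ζ makes H ∘ K a homeomorphism onto Y.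
   K is built by fusion. Since H preserves restrictions, s ↦ H (z[j := s]) j is
   injective once the coordinates below j are fixed, so inside any basic clopen
   set one can choose finitely many values at j with pairwise distinct
   H-images. Stage n separates in this way the finitely many n-bit patterns
   below each of the first n nodes, treating the nodes in order of length;
   continuity of H makes the separation survive any change beyond finitely many
   bits, so the stages converge. No set-theoretic hypothesis such as V = L is
   used. *)

Lemma exists_neq_fun {A B : Type} {f g : A -> B} : f <> g -> exists a, f a <> g a.
Proof.
by move=> fg; apply: contrapT => /forallNP fga; apply/fg/funext => a; exact: contrapT (fga a).
Qed.

Lemma dependent_choice {T : Type} (Q : nat -> T -> Prop) (R : T -> T -> Prop) x0 :
  Q 0%N x0 -> (forall n x, Q n x -> exists2 y, Q n.+1 y & R x y) ->
  exists f : nat -> T, forall n, Q n (f n) /\ R (f n) (f n.+1).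
Proof.
move=> Q0 QS.
have /choice [g gP] : forall nx : nat * T, exists y,
    Q nx.1 nx.2 -> Q nx.1.+1 y /\ R nx.2 y.
  move=> [n x]; have [/QS [y Qy Rxy]|nQ] := pselect (Q n x); first by exists y.
  by exists x.
pose f := fix f n := if n is k.+1 then g (k, f k) else x0.
have Qf n : Q n (f n) by elim: n => // n /(gP (n, f n)) [].
by exists f => n; split; [exact: Qf|exact: (gP (n, f n) (Qf n)).2].
Qed.

Section ProductTopology.
Context {J : Type} {T : J -> topologicalType}.

Lemma cvg_prod (F : set_system (prod_topology T)) (x : prod_topology T) :
  Filter F -> (forall j, (fun y => y j) @ F --> x j) -> F --> x.
Proof.
move=> FF Fx; apply/cvg_sup => j A [_ [[B oB <-] Bx] /filterS]; apply.
by apply: Fx; exact: open_nbhs_nbhs.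
Qed.

Lemma continuous_prod {X : topologicalType} (f : X -> prod_topology T) :
  (forall j, continuous (fun x => f x j)) -> continuous f.
Proof. by move=> cf x; apply: cvg_prod => j; exact: cf. Qed.

Lemma continuous_proj j : continuous (fun y : prod_topology T => y j).
Proof.
move=> x A Ax; move: (@cvg_id _ (nbhs x)) => /cvg_sup /(_ j) xx.
exact: xx _ (@initial_continuous _ _ (fun y : prod_topology T => y j) x A Ax).
Qed.

End ProductTopology.

Lemma compact_continuous_inverse {T U : topologicalType} (t0 : T) (f : T -> U) :
  compact [set: T] -> hausdorff_space U -> continuous f -> injective f ->
  exists g : U -> T, {within range f, continuous g} /\ cancel f g.
Proof.
move=> cT hU cf fI.
pose g y := xget t0 [set x | f x = y].
have fK : cancel f g.
  move=> x; apply: fI.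
  exact: (@xgetPex _ t0 [set x' | f x' = f x] (ex_intro _ x erefl)).
exists g; split => //.
apply/subspace_continuousP => _ [x _ <-] A; rewrite /from_subspace fK.
rewrite nbhsE => -[B [oB Bx] BA].
have cK : compact (f @` ~` B).
  apply: continuous_compact; first exact: continuous_subspaceT.
  exact: subclosed_compact (open_closedC oB) cT _.
have : nbhs (f x) (~` (f @` ~` B)).
  apply: open_nbhs_nbhs; split; first exact: closed_openC (compact_closed hU cK).
  by move=> [x' nBx' /fI x'x]; apply: nBx'; rewrite x'x.
apply: filterS => y nK [x' _ x'y]; rewrite /= -x'y fK.
by apply: BA; apply: contrapT => nB; apply: nK; exists x'.
Qed.

Definition cyl (d : D) (L : nat) : set D :=
  [set y | forall m, (m < L)%N -> y m = d m].

Lemma nbhs_cyl (d : D) (A : set D) : nbhs d A -> exists L, cyl d L `<=` A.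
Proof.
pose F := filter_from setT (cyl d).
have FF : Filter F.
  apply: filter_from_filter; first by exists 0%N.
  move=> L1 L2 _ _; exists (maxn L1 L2) => // y dy.
  by split=> m mL; apply: dy; rewrite leq_max mL ?orbT.
suff /(_ A) Fd : F --> d by move=> /Fd [L _ dLA]; exists L.
apply: cvg_prod => m U /principal_filterP Udm.
by exists m.+1 => // y dy; rewrite /= dy.
Qed.

Lemma cyl_avoid (d : D) L {g : D -> D} {V : set D} :
  injective g -> finite_set V -> exists2 y, cyl d L y & ~ V (g y).
Proof.
move=> gI fV.
pose s k : D := fun m => if (m < L)%N then d m else m == L + k.
have sI : injective s.
  move=> k k' /(congr1 (fun y : D => y (L + k))).
  by rewrite /s ltnNge leq_addr /= eqxx => /esym/eqP/addnI.
apply: contrapT => nV; apply: infinite_nat.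
have gsV k : V (g (s k)).
  by apply: contrapT => nVk; apply: nV; exists (s k) => // m mL; rewrite /s mL.
suff : finite_set ((g \o s) @^-1` V) by apply: sub_finite_set => k _; exact: gsV.
by apply: finite_preimage => // k k' _ _ /gI /sI.
Qed.

Lemma cantor_separating_choice {A : finType} (c : A -> D) L {G : A -> D -> D} :
  (forall a, injective (G a)) ->
  exists phi : A -> D, (forall a, cyl (c a) L (phi a)) /\
    (forall a b, a != b -> G a (phi a) <> G b (phi b)).
Proof.
move=> GI.
suff [phi [phic phiG]] : exists phi : A -> D, (forall a, cyl (c a) L (phi a)) /\
    {in enum A &, forall a b, a != b -> G a (phi a) <> G b (phi b)}.
  by exists phi; split => // a b; apply: phiG; rewrite mem_enum.
elim: (enum A) (enum_uniq A) => [_|a s IH /= /andP[as_ /IH [phi [phic phiG]]]].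
  by exists c; split.
have [y ya nV] := cyl_avoid (c a) L (GI a)
  (finite_image (fun b => G b (phi b)) (finite_seq s)).
exists (fun b => if b == a then y else phi b); split.
  by move=> b; case: eqP => [->|].
have nas b : b \in s -> (b == a) = false by apply: contraTF => /eqP->.
move=> b b'; rewrite !inE => /orP[/eqP->|bs] /orP[/eqP->|b's]; rewrite ?eqxx //.
- by rewrite nas // => _ yG; apply: nV; exists b'.
- by rewrite nas // => _ Gy; apply: nV; exists b.
- by rewrite !nas //; apply: phiG.
Qed.

Section CantorProduct.
Context {J : Type}.
Local Notation CP := (prod_topology (fun _ : J => D)).

Definition ucyl (z : CP) (L : nat) : set CP :=
  [set y | forall j m, (m < L)%N -> y j m = z j m].

Lemma ucyl_trans z y w L L' :
  (L <= L')%N -> ucyl z L y -> ucyl y L' w -> ucyl z L w.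
Proof. by move=> LL' zy yw j m mL; rewrite yw ?zy //; apply: leq_trans mL LL'. Qed.

Lemma nbhs_ucyl (z : CP) (A : set CP) : nbhs z A -> exists L, ucyl z L `<=` A.
Proof.
pose F := filter_from setT (ucyl z).
have FF : Filter F.
  apply: filter_from_filter; first by exists 0%N.
  move=> L1 L2 _ _; exists (maxn L1 L2) => // y zy.
  by split=> j m mL; apply: zy; rewrite leq_max mL ?orbT.
suff /(_ A) Fz : F --> z by move=> /Fz [L _ zLA]; exists L.
apply: cvg_prod => j U /nbhs_cyl [L zjLU].
by exists L => // y zy; apply: zjLU => m mL; exact: zy.
Qed.

Lemma nbhs_bit (z : CP) j m : nbhs z [set y | y j m = z j m].
Proof.
apply: (@continuous_proj _ _ j z [set d : D | d m = z j m]).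
by apply: (@continuous_proj _ _ m (z j) [set b | b = z j m]); apply/principal_filterP.
Qed.

Lemma continuous_bitwise {X : topologicalType} (f : X -> CP) :
  (forall x j m, nbhs x [set y | f y j m = f x j m]) -> continuous f.
Proof.
move=> fbit; apply: continuous_prod => j; apply: continuous_prod => m x U.
by move=> /principal_filterP Ufx; apply: filterS (fbit x j m) => y /= ->.
Qed.

Lemma ucyl_chain {z : nat -> CP} {L : nat -> nat} :
  (forall n, L n <= L n.+1)%N -> (forall n, ucyl (z n) (L n) (z n.+1)) ->
  forall n N, (n <= N)%N -> ucyl (z n) (L n) (z N).
Proof.
move=> LS zS n N nN.
suff [] : (L n <= L N)%N /\ ucyl (z n) (L n) (z N) by [].
apply: (@homo_leq _ (fun n => (z n, L n))
  (fun p q => (p.2 <= q.2)%N /\ ucyl p.1 p.2 q.1)) nN => //.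
- move=> y x w [xy1 xy2] [yw1 yw2].
  by split; [apply: leq_trans yw1|apply: ucyl_trans xy2 yw2].
- by move=> i; split; [exact: LS|exact: zS].
Qed.

Lemma ucyl_diagonal (z : nat -> CP) (L : nat -> nat) :
  (forall n, n <= L n)%N -> (forall n, L n <= L n.+1)%N ->
  (forall n, ucyl (z n) (L n) (z n.+1)) ->
  forall n, ucyl (z n) (L n) (fun j m => z m.+1 j m).
Proof.
move=> Lge LS zS n j m mL.
have mLm : (m < L m.+1)%N by exact: Lge.
rewrite -(ucyl_chain LS zS _ _ (leq_maxr n m.+1) j _ mLm).
exact: (ucyl_chain LS zS _ _ (leq_maxl n m.+1) j _ mL).
Qed.

Lemma cantor_prod_compact : compact [set: CP].
Proof.
have := @tychonoff {classic J} (fun _ => D) (fun _ => setT)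
  (fun _ => cantor_space_compact).
by congr (compact _); rewrite eqEsubset.
Qed.

Lemma cantor_prod_hausdorff : hausdorff_space CP.
Proof.
apply: (@hausdorff_product {classic J} (fun _ => D)) => ?.
exact: cantor_space_hausdorff.
Qed.

End CantorProduct.

Lemma sext_size {Lab : Type} {s t : seq Lab} : sext s t -> (size s < size t)%N.
Proof. by move=> [[|a u] [nu ->]] //; rewrite size_cat addnS ltnS leq_addr. Qed.

Section Tree.
Context {Lab : Type} {zeta : set (seq Lab)} (hz : inXi zeta).
Local Notation node := {t : seq Lab | zeta t}.
Local Notation P := (Dpow zeta).

Lemma node_inj {i j : node} : sval i = sval j -> i = j.
Proof.
by case: i j => [s si] [t tj] /= st; subst t; congr exist; exact: Prop_irrelevance.
Qed.

Lemma node_neq_nil (i : node) : sval i <> [::].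
Proof. by case: hz => zT _ _; apply: zT; exact: (svalP i). Qed.

Lemma node_size_gt0 (i : node) : (0 < size (sval i))%N.
Proof. by case: (sval i) (node_neq_nil i). Qed.

Definition prefix_of (i j : node) := exists u, sval j = sval i ++ u.

Lemma prefix_of_refl (i : node) : prefix_of i i.
Proof. by exists [::]; rewrite cats0. Qed.

Lemma prefix_of_trans {i j k : node} : prefix_of i j -> prefix_of j k -> prefix_of i k.
Proof. by move=> [u ju] [v kv]; exists (u ++ v); rewrite kv ju catA. Qed.

Lemma sext_prefix_of {i j : node} : sext (sval i) (sval j) -> prefix_of i j.
Proof. by move=> [u [_ ju]]; exists u. Qed.

Lemma prefix_of_size {i j : node} : prefix_of i j -> (size (sval i) <= size (sval j))%N.
Proof. by move=> [u ju]; rewrite ju size_cat leq_addr. Qed.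

Lemma prefix_ofE {i j : node} : prefix_of i j -> i = j \/ sext (sval i) (sval j).
Proof.
move=> [[|a u] ij]; first by left; apply: node_inj; rewrite ij cats0.
by right; exists (a :: u).
Qed.

Lemma zeta_prefix {j : node} {s u : seq Lab} : sval j = s ++ u -> s <> [::] -> zeta s.
Proof.
case: u => [|a u] js s0; first by rewrite -[s]cats0 -js; exact: (svalP j).
by case: hz => _ _; apply; [exact: (svalP j)|exact: s0|exists (a :: u)].
Qed.

Lemma zeta_take (j : node) (t : 'I_(size (sval j))) : zeta (take t.+1 (sval j)).
Proof.
apply: (zeta_prefix (esym (cat_take_drop t.+1 (sval j)))).
move=> /(congr1 size) /eqP; rewrite size_take_min -leqn0 leqNgt leq_min /=.
by rewrite (leq_ltn_trans (leq0n t) (ltn_ord t)).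
Qed.

Definition pnode (j : node) (t : 'I_(size (sval j))) : node :=
  exist _ (take t.+1 (sval j)) (@zeta_take j t).

Lemma pnode_prefix (j : node) t : prefix_of (pnode j t) j.
Proof. by exists (drop t.+1 (sval j)); rewrite cat_take_drop. Qed.

Lemma prefix_ofP {i j : node} : prefix_of i j -> exists t, i = pnode j t.
Proof.
move=> ij; have := prefix_of_size ij; case: ij => u ju.
rewrite -(prednK (node_size_gt0 i)) => ltij; exists (Ordinal ltij); apply: node_inj.
by rewrite /= prednK ?node_size_gt0 // ju take_size_cat.
Qed.

Definition prefixes (j : node) : set (seq Lab) :=
  [set s | s <> [::] /\ exists u, sval j = s ++ u].

Lemma prefixes_inXi (j : node) : inXi (prefixes j).
Proof.
split; first by move=> s [].
- apply: finite_set_countable.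
  apply: (@sub_finite_set _ _ [set take k (sval j) | k in `I_(size (sval j)).+1]).
    move=> s [_ [u ju]]; exists (size s); last by rewrite ju take_size_cat.
    by rewrite /= ju size_cat ltnS leq_addr.
  exact/finite_image/finite_II.
- move=> s t [_ [u ju]] s0 [v [_ tv]]; split => //.
  by exists (v ++ u); rewrite ju tv catA.
Qed.

Lemma prefixes_sub (j : node) : prefixes j `<=` zeta.
Proof. by move=> s [s0 [u ju]]; exact: zeta_prefix ju s0. Qed.

Lemma restr_eq_prefixes (x y : P) (j : node) :
  restr_eq (prefixes j) x y <-> (forall i, prefix_of i j -> x i = y i).
Proof.
split=> xy i; first by move=> ij; apply: xy; split; [exact: node_neq_nil|exact: ij].
by move=> [_ ij]; exact: xy.
Qed.

Definition agree (n : nat) (j : node) (x y : P) :=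
  forall i, prefix_of i j -> forall m, (m < n)%N -> x i m = y i m.

Lemma agree_sym {n j x y} : agree n j x y -> agree n j y x.
Proof. by move=> xy i ij m mn; rewrite xy. Qed.

Lemma agree_trans {n j x y w} : agree n j x y -> agree n j y w -> agree n j x w.
Proof. by move=> xy yw i ij m mn; rewrite xy ?yw. Qed.

Lemma agree_le {n n' j x y} : (n' <= n)%N -> agree n j x y -> agree n' j x y.
Proof. by move=> n'n xy i ij m mn'; apply: xy => //; exact: leq_trans mn' n'n. Qed.

Lemma agree_prefix {n i j x y} : prefix_of i j -> agree n j x y -> agree n i x y.
Proof. by move=> ij xy k ki; apply: xy; exact: prefix_of_trans ki ij. Qed.

Lemma ucyl_agree {n} j {x y : P} : ucyl x n y -> agree n j y x.
Proof. by move=> xy i _ m; exact: xy. Qed.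

Lemma nbhs_agree n j (x : P) : nbhs x [set y | agree n j x y].
Proof.
have := @filter_forall P _
  (fun (tm : 'I_(size (sval j)) * 'I_n) y => y (pnode j tm.1) tm.2 = x (pnode j tm.1) tm.2)
  (nbhs x) (nbhs_pfilter x) (fun tm => nbhs_bit x (pnode j tm.1) tm.2).
apply: filterS => y xy i /prefix_ofP [t ->] m mn.
by rewrite (xy (t, Ordinal mn)).
Qed.

Definition pattern n (j : node) := {ffun 'I_(size (sval j)) * 'I_n -> bool}.

Definition pat n j (x : P) : pattern n j :=
  [ffun tm : 'I_(size (sval j)) * 'I_n => x (pnode j tm.1) tm.2].

Lemma pat_eqP n j x y : pat n j x = pat n j y <-> agree n j x y.
Proof.
split=> [xy i /prefix_ofP [t ->] m mn | xy].
  by have := congr1 (fun a : pattern n j => a (t, Ordinal mn)) xy; rewrite !ffunE.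
by apply/ffunP => -[t m]; rewrite !ffunE xy //; exact: pnode_prefix.
Qed.

(* An arbitrary point if no point has pattern [a]. *)
Definition rep {n j} (a : pattern n j) : P :=
  xget (fun _ _ => false) [set x | pat n j x = a].

Lemma agree_rep n j x : agree n j x (rep (pat n j x)).
Proof.
apply/pat_eqP; apply: esym.
exact: (@xgetPex _ _ [set y | pat n j y = pat n j x] (ex_intro _ x erefl)).
Qed.

End Tree.

Section RestrictionPreserving.
Context {Lab : Type} {zeta : set (seq Lab)} (hz : inXi zeta).
Local Notation node := {t : seq Lab | zeta t}.
Local Notation P := (Dpow zeta).

Definition preserves_restrictions (F : P -> P) :=
  forall (x0 x1 : P) (xi : set (seq Lab)), inXi xi -> xi `<=` zeta ->
    (restr_eq xi x0 x1 <-> restr_eq xi (F x0) (F x1)).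

Definition upd (z : P) (j : node) (s : D) : P :=
  fun i => if pselect (i = j) then s else z i.

Lemma upd_at z j s : upd z j s j = s.
Proof. by rewrite /upd; case: pselect. Qed.

Lemma upd_ne z j s i : i <> j -> upd z j s i = z i.
Proof. by rewrite /upd; case: pselect. Qed.

Context {H : P -> P}.
Hypothesis Hres : preserves_restrictions H.

Lemma preserves_prefix_eq (x y : P) (j : node) :
  (forall i, prefix_of i j -> x i = y i) -> H x j = H y j.
Proof.
move=> xy; have := (Hres x y _ (prefixes_inXi j) (prefixes_sub hz j)).1.
by rewrite !(restr_eq_prefixes hz) => /(_ xy); apply; exact: prefix_of_refl.
Qed.

Lemma preserves_upd_inj (z : P) (j : node) : injective (fun s => H (upd z j s) j).
Proof.
move=> s s' /= Hss'.
have := (Hres (upd z j s) (upd z j s') _ (prefixes_inXi j) (prefixes_sub hz j)).2.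
rewrite !(restr_eq_prefixes hz) => /(_ _ j (prefix_of_refl j)).
rewrite !upd_at; apply=> i /prefix_ofE [->//|ij].
apply: preserves_prefix_eq => k ki.
have kj : k <> j.
  by move=> kj; move: (prefix_of_size ki) (sext_size ij); rewrite kj leqNgt => /negP.
by rewrite !upd_ne.
Qed.

Hypothesis Hcont : continuous H.

Lemma preserves_bit_stable (p : P) (j : node) m :
  exists L, forall w, agree L j w p -> H w j m = H p j m.
Proof.
have /nbhs_ucyl [L pL] := Hcont p _ (nbhs_bit (H p) j m).
exists L => w wp.
pose y : P := fun i => if pselect (prefix_of i j) then w i else p i.
have -> : H w j = H y j by apply: preserves_prefix_eq => i ij; rewrite /y; case: pselect.
by apply: pL => i k kL; rewrite /y; case: pselect => // ij; exact: wp.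
Qed.

Lemma preserves_separation_near {p q : P} {j : node} : H p j <> H q j ->
  \forall L \near \oo, forall w w', agree L j w p -> agree L j w' q -> H w j <> H w' j.
Proof.
move=> /exists_neq_fun [m pqm].
have [Lp Hp] := preserves_bit_stable p j m.
have [Lq Hq] := preserves_bit_stable q j m.
exists (maxn Lp Lq) => // L /=; rewrite geq_max => /andP[LpL LqL] w w' wp w'q ww'.
by apply: pqm; rewrite -(Hp w (agree_le LpL wp)) -(Hq w' (agree_le LqL w'q)) ww'.
Qed.

End RestrictionPreserving.
Section Fusion.
Context {Lab : Type} {zeta : set (seq Lab)} (hz : inXi zeta).
Local Notation node := {t : seq Lab | zeta t}.
Local Notation P := (Dpow zeta).
Context {H : P -> P}.
Hypotheses (Hres : preserves_restrictions H) (Hcont : continuous H).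
Context {e : nat -> option node}.
Local Notation pat := (pat hz).
Local Notation rep := (rep hz).

Definition staged n (j : node) := exists2 k, (k < n)%N & e k = Some j.

Definition determined n (Z : P -> P) := forall j x y, agree n j x y -> Z x j = Z y j.

Definition separates n (Z : P -> P) (Q : node -> Prop) :=
  forall j, Q j -> forall x y, ~ agree n j x y -> H (Z x) j <> H (Z y) j.

(* Separation at the first [n] nodes that survives any change of the images
   beyond their first [L] bits; this is the form that passes to the limit. *)
Definition robust n (Z : P -> P) L := forall j, staged n j -> forall x y,
  ~ agree n j x y -> forall w w', agree L j w (Z x) -> agree L j w' (Z y) -> H w j <> H w' j.

Lemma determinedS {n Z} : determined n Z -> determined n.+1 Z.
Proof. by move=> Zn j x y /(agree_le (leqnSn n)); exact: Zn. Qed.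

Lemma determined_rep {n Z i j} x : determined n Z ->
  prefix_of i j -> Z (rep (pat n j x)) i = Z x i.
Proof. by move=> Zn ij; apply/Zn/(agree_prefix ij)/agree_sym/(agree_rep hz). Qed.

Lemma refine_antichain {n} L {Z} {Q : node -> Prop} : determined n Z ->
  (forall i j, Q i -> Q j -> ~ sext (sval i) (sval j)) ->
  exists Z', [/\ determined n Z', forall x j, ~ Q j -> Z' x j = Z x j,
    forall x j, cyl (Z x j) L (Z' x j) & separates n Z' Q].
Proof.
move=> Zn Qanti.
have phiP j : exists phi : pattern n j -> D,
    (forall a, cyl (Z (rep a) j) L (phi a)) /\ (forall a b, a != b ->
      H (upd (Z (rep a)) j (phi a)) j <> H (upd (Z (rep b)) j (phi b)) j).
  exact: (@cantor_separating_choice _ (fun a : pattern n j => Z (rep a) j) L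
    (fun a s => H (upd (Z (rep a)) j s) j) (fun a => preserves_upd_inj hz Hres _ j)).
pose phi j := sval (cid (phiP j)).
have phi_cyl j : forall a, cyl (Z (rep a) j) L (phi j a) := (svalP (cid (phiP j))).1.
have phi_sep j : forall a b, a != b ->
    H (upd (Z (rep a)) j (phi j a)) j <> H (upd (Z (rep b)) j (phi j b)) j :=
  (svalP (cid (phiP j))).2.
pose Z' (x : P) : P := fun j => if pselect (Q j) then phi j (pat n j x) else Z x j.
have Z'Q x j : Q j -> Z' x j = phi j (pat n j x) by rewrite /Z'; case: pselect.
have Z'nQ x j : ~ Q j -> Z' x j = Z x j by rewrite /Z'; case: pselect.
exists Z'; split => //.
- move=> j x y xy; have [Qj|nQj] := pselect (Q j); last by rewrite !Z'nQ //; exact: Zn.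
  by rewrite !Z'Q // (proj2 (pat_eqP hz n j x y) xy).
- move=> x j; have [Qj|nQj] := pselect (Q j); last by rewrite Z'nQ.
  by rewrite Z'Q // -(determined_rep x Zn (prefix_of_refl j)); exact: phi_cyl.
- move=> j Qj x y nxy.
  have HZ' w : H (Z' w) j = H (upd (Z (rep (pat n j w))) j (phi j (pat n j w))) j.
    apply: (preserves_prefix_eq hz Hres) => i /prefix_ofE [->|ij].
      by rewrite upd_at Z'Q.
    rewrite upd_ne ?Z'nQ ?(determined_rep w Zn (sext_prefix_of ij)) //.
      by move/Qanti/(_ Qj).
    by move=> eij; move: (sext_size ij); rewrite eij ltnn.
  by rewrite !HZ'; apply: phi_sep; apply/eqP => /(pat_eqP hz n j x y).
Qed.

Lemma separate_upto {n} L {Z} l : determined n Z ->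
  exists Z', [/\ determined n Z', forall x, ucyl (Z x) L (Z' x) &
    separates n Z' (fun j => staged n j /\ (size (sval j) <= l)%N)].
Proof.
move=> Zn; elim: l => [|l [Z1 [Z1n ZZ1 Z1sep]]].
  by exists Z; split => // j [_]; rewrite leqNgt (node_size_gt0 hz).
pose Q j := staged n j /\ size (sval j) = l.+1.
have Qanti i j : Q i -> Q j -> ~ sext (sval i) (sval j).
  by move=> [_ il] [_ jl] /sext_size; rewrite il jl ltnn.
have [Z2 [Z2n Z2nQ Z2cyl Z2sep]] := refine_antichain L Z1n Qanti.
exists Z2; split => //.
  by move=> x i m mL; rewrite (Z2cyl x i m mL) (ZZ1 x i m mL).
move=> j [sj]; rewrite leq_eqVlt ltnS => /orP[/eqP jl|jl]; first exact: Z2sep.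
have HZ w : H (Z2 w) j = H (Z1 w) j.
  apply: (preserves_prefix_eq hz Hres) => i ij; apply: Z2nQ => -[_ il].
  by have := leq_trans (prefix_of_size ij) jl; rewrite il ltnn.
by move=> x y nxy; rewrite !HZ; apply: Z1sep.
Qed.

Lemma staged_size n j : staged n j ->
  (size (sval j) <= \max_(k < n) if e k is Some i then size (sval i) else 0)%N.
Proof.
move=> [k kn ekj].
have := @leq_bigmax _
  (fun k : 'I_n => if e k is Some i then size (sval i) else 0%N) (Ordinal kn).
by rewrite /= ekj.
Qed.

Lemma separate {n} L {Z} : determined n Z ->
  exists Z', [/\ determined n Z', forall x, ucyl (Z x) L (Z' x) & separates n Z' (staged n)].
Proof.
move=> /(separate_upto L (\max_(k < n) if e k is Some i then size (sval i) else 0)).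
move=> [Z' [Z'n ZZ' Z'sep]]; exists Z'; split => // j sj.
by apply: Z'sep; split => //; exact: staged_size.
Qed.

Lemma near_staged {n} {R : node -> nat -> Prop} :
  (forall j, staged n j -> \forall L \near \oo, R j L) ->
  \forall L \near \oo, forall j, staged n j -> R j L.
Proof.
move=> hR.
have : \forall L \near \oo, forall k : 'I_n, forall j, e k = Some j -> R j L.
  apply: filter_forall => k; case ekj: (e k) => [j|]; last by apply: nearW.
  by apply: filterS (hR j (ex_intro2 _ _ (nat_of_ord k) (ltn_ord k) ekj)) => L RjL i [<-].
by apply: filterS => L hL j [k kn ekj]; exact: (hL (Ordinal kn) j ekj).
Qed.

Lemma robust_near {n Z} : determined n Z -> separates n Z (staged n) ->
  \forall L \near \oo, robust n Z L.
Proof.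
move=> Zn Zsep; apply: near_staged => j sj.
have : \forall L \near \oo, forall ab : pattern n j * pattern n j,
    ~ agree n j (rep ab.1) (rep ab.2) -> forall w w',
    agree L j w (Z (rep ab.1)) -> agree L j w' (Z (rep ab.2)) -> H w j <> H w' j.
  apply: filter_forall => -[a b] /=.
  have [ab|nab] := pselect (agree n j (rep a) (rep b)); first by apply: nearW.
  by apply: filterS (preserves_separation_near hz Hres Hcont (Zsep j sj _ _ nab)) => L + _.
have agree_Zrep L w x : agree L j w (Z x) -> agree L j w (Z (rep (pat n j x))).
  by move=> wx i ij m mL; rewrite (determined_rep x Zn ij); exact: wx.
apply: filterS => L hL x y nxy w w' wx w'y.
apply: (hL (pat n j x, pat n j y)); rewrite /=; try exact: agree_Zrep.
move=> xy; apply/nxy/(agree_trans (agree_rep hz n j x)).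
exact: agree_trans xy (agree_sym (agree_rep hz n j y)).
Qed.

Lemma fusion_step {n Z} L : determined n Z -> exists Z' L',
  [/\ determined n.+1 Z', robust n.+1 Z' L', (maxn L n.+1 <= L')%N &
      forall x, ucyl (Z x) L (Z' x)].
Proof.
move=> /determinedS /(separate L) [Z' [Z'n ZZ' Z'sep]].
have [N _ robN] := robust_near Z'n Z'sep.
exists Z', (maxn N (maxn L n.+1)); split => //; last exact: leq_maxr.
by apply: robN; exact: leq_maxl.
Qed.

Lemma fusion_sequence : exists (Z : nat -> P -> P) (L : nat -> nat), forall n,
  [/\ determined n (Z n), robust n (Z n) (L n), (n <= L n)%N, (L n <= L n.+1)%N &
      forall x, ucyl (Z n x) (L n) (Z n.+1 x)].
Proof.
pose Q n (p : (P -> P) * nat) := [/\ determined n p.1, robust n p.1 p.2 & (n <= p.2)%N].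
pose R (p q : (P -> P) * nat) := (p.2 <= q.2)%N /\ forall x, ucyl (p.1 x) p.2 (q.1 x).
have [|n [Z L] [Zn _ _]|f fP] := @dependent_choice _ Q R ((fun _ _ _ => false), 0%N).
- by split => // j [].
- have [Z' [L' [Z'n Z'rob LL' ZZ']]] := fusion_step L Zn.
  exists (Z', L'); split => //=; first by apply: leq_trans LL'; exact: leq_maxr.
  by apply: leq_trans LL'; exact: leq_maxl.
- exists (fun n => (f n).1), (fun n => (f n).2) => n.
  by have [[? ? ?] [? ?]] := fP n; split.
Qed.

Hypothesis e_surj : forall j, exists k, e k = Some j.

Lemma fusion : exists K : P -> P, [/\ continuous K,
  forall x y j, (forall i, prefix_of i j -> x i = y i) -> K x j = K y j &
  forall x y i j, prefix_of i j -> x i <> y i -> H (K x) j <> H (K y) j].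
Proof.
have [Z [L ZL]] := fusion_sequence.
(* Bit [m] no longer changes after stage [m.+1], as [m < L m.+1]. *)
pose K x : P := fun j m => Z m.+1 x j m.
have KZ n x : ucyl (Z n x) (L n) (K x).
  by apply: (ucyl_diagonal (fun n => Z n x) L) => k; have [] := ZL k.
exists K; split.
- apply: continuous_bitwise => x j m; apply: filterS (nbhs_agree hz m.+1 j x) => y xy.
  by have [Zm _ _ _ _] := ZL m.+1; rewrite /K (Zm j x y xy).
- move=> x y j xy; apply/funext => m; have [Zm _ _ _ _] := ZL m.+1.
  by rewrite /K (Zm j x y) => // i ij k _; rewrite xy.
- move=> x y i j ij /exists_neq_fun [m xym]; have [k ekj] := e_surj j.
  have [_ rob _ _ _] := ZL (maxn k.+1 m.+1).
  apply: (rob j _ x y _ (K x) (K y)); try exact: ucyl_agree.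
    by exists k => //; exact: leq_maxl.
  by move=> xy; apply/xym/xy => //; exact: leq_maxr.
Qed.

End Fusion.

Section Composition.
Context {Lab : Type} {zeta : set (seq Lab)} (hz : inXi zeta).
Local Notation node := {t : seq Lab | zeta t}.
Local Notation P := (Dpow zeta).
Context {H K : P -> P}.
Hypothesis Hres : preserves_restrictions H.
Hypothesis K_prefix_eq :
  forall x y j, (forall i, prefix_of i j -> x i = y i) -> K x j = K y j.
Hypothesis HK_sep :
  forall x y i j, prefix_of i j -> x i <> y i -> H (K x) j <> H (K y) j.

Lemma comp_prefix_eq x y j :
  H (K x) j = H (K y) j -> forall i, prefix_of i j -> x i = y i.
Proof. by move=> HKxy i ij; apply: contrapT => /(HK_sep x y i j ij). Qed.

Lemma comp_injective : injective (H \o K).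
Proof.
move=> x y /= HKxy; apply/funext => j.
exact: comp_prefix_eq (congr1 (fun z => z j) HKxy) _ (prefix_of_refl j).
Qed.

Lemma comp_preserves_restrictions : preserves_restrictions (H \o K).
Proof.
move=> x y xi xiXi xiz; split=> xy; last first.
  by move=> t xit; apply: comp_prefix_eq (xy t xit) _ (prefix_of_refl t).
apply: (Hres (K x) (K y) xi xiXi xiz).1 => t xit.
apply: K_prefix_eq => i /prefix_ofE [->|it]; first exact: xy.
apply: xy; case: xiXi => _ _; apply; [exact: xit|exact: node_neq_nil hz i|exact: it].
Qed.

Lemma comp_uniform : uniform (range (H \o K)).
Proof.
move=> i j ij _ _ [x _ <-] [y _ <-] /= /comp_prefix_eq xy.
apply: (preserves_prefix_eq hz Hres) => k ki; apply: K_prefix_eq => l lk.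
exact/xy/(prefix_of_trans lk)/(prefix_of_trans ki)/sext_prefix_of.
Qed.

End Composition.

Lemma countable_nodes {Lab : Type} {zeta : set (seq Lab)} : countable zeta ->
  exists e : nat -> option {t : seq Lab | zeta t}, forall j, exists k, e k = Some j.
Proof.
case/ocard_geP => g.
pose e k := if g k is Some s then
  (if pselect (zeta s) is left zs then Some (exist _ s zs) else None) else None.
exists e => j; have [k _ gk] := @surj _ _ _ _ g (Some (sval j)) (imageP _ (svalP j)).
exists k; rewrite /e gk; case: pselect => [zs|]; last by move/(_ (svalP j)).
by congr Some; apply: node_inj.
Qed.

Lemma homeo_onto_range {Lab : Type} {zeta : set (seq Lab)} (M : Dpow zeta -> Dpow zeta) :
  continuous M -> injective M -> homeo_onto M (range M).
Proof.
move=> cM iM; split => //.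
pose x0 : Dpow zeta := fun _ _ => false.
exact: compact_continuous_inverse x0 M cantor_prod_compact cantor_prod_hausdorff cM iM.
Qed.

Theorem lemma3p11 (Lab : Type) (zeta : set (seq Lab)) (X : set (Dpow zeta)) :
  inXi zeta -> IPS X ->
  exists Y : set (Dpow zeta), [/\ IPS Y, uniform Y & Y `<=` X].
Proof.
move=> hz [H [[Hcont _ HX _] Hres]].
have [_ zc _] := hz; have [e e_surj] := countable_nodes zc.
have [K [Kcont K_prefix_eq HK_sep]] := fusion hz Hres Hcont e_surj.
exists (range (H \o K)); split.
- exists (H \o K); split; last exact: comp_preserves_restrictions.
  apply: homeo_onto_range; last exact: comp_injective.
  by move=> x; apply: continuous_comp; [exact: Kcont|exact: Hcont].
- exact: comp_uniform.
- by rewrite -HX => _ [x _ <-]; exists (K x).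
Qed.
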